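(* Let $k\ge3$, $F$ a field, $\Phi\le F^*$ of order $k$ with generator $\varphi$, $(F,\Phi)$ circular. Let $\mathcal{G}=\mathcal{G}_0$ if $k$ is even and $\mathcal{G}=\mathcal{G}_1$ if $k$ is odd. Then every $\mathcal{G}$-orbit in $\mathcal{O}_\varphi(F,k)$ contains a reduced element.
   Context: $\mathbf{k}=\{1,\dots,k-1\}$, $\mathbf{k}_0=\{0,\dots,k-1\}$. $(F,\Phi)$ is circular if $|(\Phi a+b)\cap\Phi c|\le2$ for all $a,b,c\in F^*$, with $\Phi a+b=\{\lambda a+b:\lambda\in\Phi\}$. A quadruple $(i,j\mid s,t)\in\mathbf{k}^4$ with $i\ne s$ is an overlap (w.r.t. $\varphi$) if $\varphi^\omega(\varphi^j-1)(\varphi^s-1)=(\varphi^i-1)(\varphi^t-1)$ for some $\omega\in\mathbf{k}_0$; it is trivial if one of $i\equiv\pm j$, $j\equiv\pm t$, $t\equiv\pm s$, $s\equiv\pm i\pmod k$ holds, nontrivial otherwise; $\mathcal{O}_\varphi(F,k)$ is the set of nontrivial overlaps. For $m=1,\dots,4$, $\kappa_m$ replaces the $m$-th entry $u$ of a quadruple by $k-u$. $D_4$ is the group of coordinate permutations of $(i,j\mid s,t)$ generated by $(i,t)$, $(j,s)$, $(i,j)(s,t)$. $\mathcal{G}_0=\langle\kappa_1,\dots,\kappa_4,D_4\rangle$ and $\mathcal{G}_1=\langle\kappa_1\kappa_4,\kappa_2\kappa_4,\kappa_3\kappa_4,D_4\rangle$. An element $(i,j\mid s,t)$ is reduced if $i<j\le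 s$, $j\le k/2$, and at most one of $i,j,s,t$ exceeds $k/2$. *)

From HB Require Import structures.
From mathcomp Require Import all_boot all_order all_algebra.
From Stdlib Require List.
Set Implicit Arguments. Unset Strict Implicit. Unset Printing Implicit Defensive.
Import Order.TTheory GRing.Theory Num.Theory.

Record quad := Quad { qi : nat; qj : nat; qs : nat; qt : nat }.

Section Defs.
Variable F : fieldType.
Local Open Scope ring_scope.

Definition Phi_seq (phi : F) (k : nat) : seq F := [seq phi ^+ n | n <- iota 0 k].

Definition circular (Phi : seq F) : Prop :=
  forall a b c : F, a != 0 -> b != 0 -> c != 0 ->
    (size (undup [seq x <- [seq (l * a + b)%R | l <- Phi] | x \in [seq (l * c)%R | l <- Phi]])
       <= 2)%N.

Definition in_k (k u : nat) : bool := (0 < u < k)%N.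

Definition in_k4 (k : nat) (q : quad) : bool :=
  [&& in_k k (qi q), in_k k (qj q), in_k k (qs q) & in_k k (qt q)].

Definition overlap (phi : F) (k : nat) (q : quad) : Prop :=
  in_k4 k q /\ qi q <> qs q /\
  exists w : nat, (w < k)%N /\
    phi ^+ w * (phi ^+ qj q - 1) * (phi ^+ qs q - 1)
    = (phi ^+ qi q - 1) * (phi ^+ qt q - 1).

Definition congpm (k a b : nat) : bool :=
  (a == b %[mod k]) || (a + b == 0 %[mod k]).

Definition trivial_quad (k : nat) (q : quad) : bool :=
  [|| congpm k (qi q) (qj q), congpm k (qj q) (qt q),
      congpm k (qt q) (qs q) | congpm k (qs q) (qi q)].

Definition nontriv_overlap (phi : F) (k : nat) (q : quad) : Prop :=
  overlap phi k q /\ ~~ trivial_quad k q.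

End Defs.

Definition kappa1 (k : nat) (q : quad) := Quad (k - qi q) (qj q) (qs q) (qt q).
Definition kappa2 (k : nat) (q : quad) := Quad (qi q) (k - qj q) (qs q) (qt q).
Definition kappa3 (k : nat) (q : quad) := Quad (qi q) (qj q) (k - qs q) (qt q).
Definition kappa4 (k : nat) (q : quad) := Quad (qi q) (qj q) (qs q) (k - qt q).

Definition swap_it (q : quad) := Quad (qt q) (qj q) (qs q) (qi q).
Definition swap_js (q : quad) := Quad (qi q) (qs q) (qj q) (qt q).
Definition swap_ij_st (q : quad) := Quad (qj q) (qi q) (qt q) (qs q).

Definition D4_gens : list (quad -> quad) := swap_it :: swap_js :: swap_ij_st :: nil.

Definition G0_gens (k : nat) : list (quad -> quad) :=
  kappa1 k :: kappa2 k :: kappa3 k :: kappa4 k :: D4_gens.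

Definition G1_gens (k : nat) : list (quad -> quad) :=
  (fun q => kappa1 k (kappa4 k q)) :: (fun q => kappa2 k (kappa4 k q)) ::
  (fun q => kappa3 k (kappa4 k q)) :: D4_gens.

Definition G_gens (k : nat) : list (quad -> quad) :=
  if odd k then G1_gens k else G0_gens k.

(* All the
   generators are involutions on the quadruples considered, so the orbit under
   the generated group coincides with the closure under the generators. *)
Inductive quad_orbit (gens : list (quad -> quad)) (q : quad) : quad -> Prop :=
  | orbit_refl : quad_orbit gens q q
  | orbit_step : forall (r : quad) (g : quad -> quad),
      quad_orbit gens q r -> List.In g gens -> quad_orbit gens q (g r).

Definition reduced (k : nat) (q : quad) : bool :=
  [&& (qi q < qj q <= qs q)%N, (qj q).*2 <= k &
      (count (fun u => k < u.*2) [:: qi q; qj q; qs q; qt q] <= 1)%N].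
Arguments quad_orbit gens q _ : clear implicits.

From mathcomp Require Import all_boot all_order all_algebra.
From mathcomp Require Import zify.
Set Implicit Arguments. Unset Strict Implicit. Unset Printing Implicit Defensive.
Local Open Scope ring_scope.

(* Lemma 17 is purely combinatorial: only the facts that a nontrivial overlap
   has all entries in {1, ..., k-1} and that it is not trivial are used.

   Write  pmrep k u  for the representative of {u, -u} mod k in [0, k/2].
   Nontriviality says that along the 4-cycle  i - j - t - s - i  adjacent
   entries have distinct representatives.  The dihedral group D_4 acts on this
   square transitively, so it moves a vertex carrying the smallest
   representative to position i; its two neighbours j and s then carry strictly
   larger representatives, and swapping j and s orders them (D4_sort).  Finally
   the maps kappa_m (or kappa_m kappa_4 for odd k) replace each of the entries
   i, j, s by its representative (orbit_pmrep), which makes all three at most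
   k/2: the result is reduced, with only t possibly exceeding k/2. *)

Definition entries (q : quad) : seq nat := [:: qi q; qj q; qs q; qt q].

Lemma in_k4_entries k q : in_k4 k q = all (in_k k) (entries q).
Proof. by rewrite /in_k4 /= andbT. Qed.

Lemma orbit_trans gens q r s :
  quad_orbit gens q r -> quad_orbit gens r s -> quad_orbit gens q s.
Proof. by move=> Hqr; elim=> // r' g _ IH Hg; apply: orbit_step. Qed.

Lemma orbit_gen gens q g : List.In g gens -> quad_orbit gens q (g q).
Proof. by apply: orbit_step; apply: orbit_refl. Qed.

Lemma orbit_incl gens gens' q r : List.incl gens gens' ->
  quad_orbit gens q r -> quad_orbit gens' q r.
Proof.
move=> Hincl; elim=> [|r' g _ IH Hg]; first exact: orbit_refl.
by apply: orbit_step IH (Hincl g Hg).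
Qed.

(* D_4 only permutes coordinates, so its orbits do not create new entries. *)
Lemma D4_orbit_entries q r :
  quad_orbit D4_gens q r -> {subset entries r <= entries q}.
Proof.
elim=> // r' g _ IH Hg x Hx; apply: IH.
move: Hg Hx; rewrite /entries !inE /=.
by case=> [<-|[<-|[<-|[]]]] /= /or4P[] ->; rewrite ?orbT.
Qed.

Lemma D4_sort (f : nat -> nat) q :
  f (qi q) != f (qj q) -> f (qj q) != f (qt q) ->
  f (qt q) != f (qs q) -> f (qs q) != f (qi q) ->
  exists r, quad_orbit D4_gens q r /\ (f (qi r) < f (qj r) <= f (qs r))%N.
Proof.
case: q => i j s t /= Dij Djt Dts Dsi.
have sort_neighbours r : quad_orbit D4_gens (Quad i j s t) r ->
    (f (qi r) < f (qj r))%N -> (f (qi r) < f (qs r))%N ->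
    exists r0, quad_orbit D4_gens (Quad i j s t) r0 /\
      (f (qi r0) < f (qj r0) <= f (qs r0))%N.
  move=> Hr Hij His; case: (leqP (f (qj r)) (f (qs r))) => Hjs.
    by exists r; rewrite Hij Hjs.
  exists (swap_js r); split; first by apply: orbit_step Hr _; right; left.
  by rewrite /= His ltnW.
have D1 : List.In swap_it D4_gens by left.
have D3 : List.In swap_ij_st D4_gens by right; right; left.
have [[Hj [Hs Ht]]|[[Hi [Hs Ht]]|[[Hi [Hj Ht]]|[Hi [Hj Hs]]]]] :
  (f i <= f j /\ f i <= f s /\ f i <= f t \/
   f j <= f i /\ f j <= f s /\ f j <= f t \/
   f s <= f i /\ f s <= f j /\ f s <= f t \/
   f t <= f i /\ f t <= f j /\ f t <= f s)%N by lia.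
- by apply: sort_neighbours; [exact: orbit_refl|rewrite /=; lia..].
- apply: (sort_neighbours (swap_ij_st (Quad i j s t)));
    [exact: orbit_gen|rewrite /=; lia..].
- apply: (sort_neighbours (swap_ij_st (swap_js (Quad i j s t))));
    [by apply: orbit_step D3; apply: orbit_gen; right; left|rewrite /=; lia..].
- apply: (sort_neighbours (swap_it (Quad i j s t)));
    [exact: orbit_gen|rewrite /=; lia..].
Qed.

Definition pmrep (k u : nat) : nat := if (k < u.*2)%N then (k - u)%N else u.

Lemma pmrep_half k u : (u <= k)%N -> ((pmrep k u).*2 <= k)%N.
Proof. by rewrite /pmrep -!muln2; case: ifP => ? ?; lia. Qed.

Lemma pmrep_inj k u v : in_k k u -> in_k k v -> pmrep k u = pmrep k v ->
  congpm k u v.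
Proof.
move=> Hu Hv Huv; rewrite /congpm.
have [->|<-] : u = v \/ (u + v = k)%N.
  by move: Huv Hu Hv; rewrite /in_k /pmrep -!muln2; do 2 case: ifP; lia.
- by rewrite eqxx.
- by rewrite modnn mod0n eqxx orbT.
Qed.

Lemma nontrivial_pmrep_neq k q : in_k4 k q -> ~~ trivial_quad k q -> [/\
  pmrep k (qi q) != pmrep k (qj q), pmrep k (qj q) != pmrep k (qt q),
  pmrep k (qt q) != pmrep k (qs q) & pmrep k (qs q) != pmrep k (qi q)].
Proof.
case/and4P=> Hi Hj Hs Ht /norP[Nij /norP[Njt /norP[Nts Nsi]]].
split; apply/eqP.
- by move/(pmrep_inj Hi Hj); apply/negP.
- by move/(pmrep_inj Hj Ht); apply/negP.
- by move/(pmrep_inj Ht Hs); apply/negP.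
- by move/(pmrep_inj Hs Hi); apply/negP.
Qed.

Lemma G_flips k : exists g1 g2 g3,
  [/\ List.In g1 (G_gens k), List.In g2 (G_gens k) & List.In g3 (G_gens k)] /\
  forall q, [/\ [/\ qi (g1 q) = (k - qi q)%N, qj (g1 q) = qj q & qs (g1 q) = qs q],
                [/\ qi (g2 q) = qi q, qj (g2 q) = (k - qj q)%N & qs (g2 q) = qs q] &
                [/\ qi (g3 q) = qi q, qj (g3 q) = qj q & qs (g3 q) = (k - qs q)%N]].
Proof.
rewrite /G_gens; case: (odd k).
- exists (fun q => kappa1 k (kappa4 k q)), (fun q => kappa2 k (kappa4 k q)),
    (fun q => kappa3 k (kappa4 k q)).
  by split=> //; split; [left|right; left|right; right; left].
- exists (kappa1 k), (kappa2 k), (kappa3 k).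
  by split=> //; split; [left|right; left|right; right; left].
Qed.

Lemma orbit_pmrep k q : exists r, quad_orbit (G_gens k) q r /\
  [/\ qi r = pmrep k (qi q), qj r = pmrep k (qj q) & qs r = pmrep k (qs q)].
Proof.
have [g1 [g2 [g3 [[G1 G2 G3] Hg]]]] := G_flips k.
have [r1 [O1 [E1i E1j E1s]]] : exists r1, quad_orbit (G_gens k) q r1 /\
    [/\ qi r1 = pmrep k (qi q), qj r1 = qj q & qs r1 = qs q].
  rewrite /pmrep; case: ifP => _; last by exists q; split=> //; apply: orbit_refl.
  by exists (g1 q); split; [exact: orbit_gen|case: (Hg q)].
have [r2 [O2 [E2i E2j E2s]]] : exists r2, quad_orbit (G_gens k) r1 r2 /\
    [/\ qi r2 = qi r1, qj r2 = pmrep k (qj r1) & qs r2 = qs r1].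
  rewrite /pmrep; case: ifP => _; last by exists r1; split=> //; apply: orbit_refl.
  by exists (g2 r1); split; [exact: orbit_gen|case: (Hg r1)].
have [r3 [O3 [E3i E3j E3s]]] : exists r3, quad_orbit (G_gens k) r2 r3 /\
    [/\ qi r3 = qi r2, qj r3 = qj r2 & qs r3 = pmrep k (qs r2)].
  rewrite /pmrep; case: ifP => _; last by exists r2; split=> //; apply: orbit_refl.
  by exists (g3 r2); split; [exact: orbit_gen|case: (Hg r2)].
exists r3; split; first by apply: orbit_trans O3; apply: orbit_trans O2.
by rewrite E3i E3j E3s E2i E2j E2s E1i E1j E1s.
Qed.

Lemma reduced_sorted k r : (qi r < qj r <= qs r)%N ->
  ((qi r).*2 <= k)%N -> ((qj r).*2 <= k)%N -> ((qs r).*2 <= k)%N -> reduced k r.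
Proof.
move=> Hsort Hi Hj Hs; rewrite /reduced Hsort Hj /= !ltnNge Hi Hj Hs /=.
by case: (_ <= k)%N.
Qed.

Lemma D4_incl_G k : List.incl D4_gens (G_gens k).
Proof.
rewrite /G_gens /G1_gens /G0_gens; case: (odd k);
  by [do 3 apply: List.incl_tl | do 4 apply: List.incl_tl]; apply: List.incl_refl.
Qed.

Theorem lemma17 (F : fieldType) (k : nat) (phi : F) :
  (3 <= k)%N ->
  k.-primitive_root phi ->
  circular (Phi_seq phi k) ->
  forall q : quad, nontriv_overlap phi k q ->
    exists r : quad, quad_orbit (G_gens k) q r /\ reduced k r.
Proof.
move=> _ _ _ q [[Hq _] Hnontriv].
have [Dij Djt Dts Dsi] := nontrivial_pmrep_neq Hq Hnontriv.
have [r [Hr Hsort]] := @D4_sort (pmrep k) q Dij Djt Dts Dsi.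
have entry_le u : u \in entries r -> (u <= k)%N.
  move/(D4_orbit_entries Hr); move: Hq; rewrite in_k4_entries => /allP Hq /Hq.
  by case/andP=> _ /ltnW.
have [r' [Hr' [Ei Ej Es]]] := orbit_pmrep k r.
exists r'; split.
  by apply: orbit_trans Hr'; apply: orbit_incl Hr; apply: D4_incl_G.
by apply: reduced_sorted; rewrite ?Ei ?Ej ?Es //; apply: pmrep_half;
  apply: entry_le; rewrite !inE eqxx ?orbT.
Qed.
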